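(* Let $p,p'$ be two POPs of size $k$ having the same set of isolated vertices $I=\{i_1<i_2<\dots<i_s\}$ (with $s\ge 1$). Suppose that for every $x\in [i_1,k]\setminus I$ and every $y\in[i_1-1]$ we have $y<_p x$ and $y<_{p'}x$. Let $I_p,I_{p'}$ be the subposets of $p,p'$ induced by the labels $[i_1-1]$, and let $J_p,J_{p'}$ be the subposets of $p,p'$ induced by the labels $[i_1,k]\setminus I$. If $I_p\sim_s I_{p'}$ and $J_p=J_{p'}$ (as labeled posets), then $p\sim p'$.
   Context: A partially ordered pattern (POP) $p$ of size $k$ is a partial order $\le_p$ on the label set $[k]=\{1,\dots,k\}$. A permutation $\pi=\pi_1\cdots\pi_n\in\mathfrak S_n$ contains $p$ if there are indices $i_1<\dots<i_k$ such that $\pi_{i_j}<\pi_{i_m}$ whenever $j<_p m$; otherwise $\pi$ avoids $p$. $\mathfrak S_n(p)$ denotes the set of permutations in $\mathfrak S_n$ avoiding $p$. Two POPs $p,q$ are Wilf-equivalent, $p\sim q$, if $|\mathfrak S_n(p)|=|\mathfrak S_n(q)|$ for all $n\ge1$. A vertex (label) of $p$ is isolated if it is comparable to no other vertex. For $[a,b]=\{a,a+1,\dots,b\}$. A subposet induced by a set of labels keeps the order restricted to those labels (when the labels are $[r]$ it is a POP of size $r$). A Ferrers board $\lambda=(\lambda_1\ge\lambda_2\ge\dots\ge\lambda_n>0)$ with $\lambda_1=n$ is drawn in French notation: rows are numbered $1,\dots,n$ from bottom to top, columns from left to right, and row $i$ consists of the cells $(i,1),\dots,(i,\lambda_i)$.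 A transversal of $\lambda$ is a $0/1$-filling of its cells with exactly one $1$ in each row and each column. A transversal $T$ contains a POP $p$ of size $m$ if there are rows $r_1<\dots<r_m$ and columns $c_1<\dots<c_m$ such that every cell $(r_a,c_b)$ lies in $\lambda$, and for each $b$ the $1$ of column $c_b$ lies in row $r_{\sigma(b)}$ for some $\sigma(b)\in[m]$ (so $\sigma$ is a permutation), with $\sigma(j)<\sigma(m')$ whenever $j<_p m'$; otherwise $T$ avoids $p$. Two POPs $p,q$ are shape-Wilf-equivalent, $p\sim_s q$, if for every Ferrers board $\lambda$ the number of transversals of $\lambda$ avoiding $p$ equals the number avoiding $q$. *)

From mathcomp Require Import all_boot all_fingroup.
Set Implicit Arguments. Unset Strict Implicit. Unset Printing Implicit Defensive.

(* A POP of size k: a strict partial order p on the labels 1..k (labels are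
   natural numbers; p x y means x <_p y). *)
Definition is_pop (k : nat) (p : rel nat) : Prop :=
  [/\ forall x y, p x y -> (1 <= x <= k) && (1 <= y <= k),
      forall x, ~~ p x x &
      forall x y z, p x y -> p y z -> p x z].

Definition isolated (k : nat) (p : rel nat) (x : nat) : bool :=
  all (fun y => ~~ p x y && ~~ p y x) (iota 1 k).

Definition restrict (p : rel nat) (r : nat) : rel nat :=
  fun a b => [&& p a b, a <= r & b <= r].

(* pi contains the POP p of size k (label j+1 <-> position j of 'I_k) *)
Definition perm_contains (k n : nat) (p : rel nat) (s : 'S_n) : bool :=
  [exists f : {ffun 'I_k -> 'I_n},
    [forall a : 'I_k, forall b : 'I_k, (a < b) ==> (f a < f b)] &&
    [forall a : 'I_k, forall b : 'I_k,
        p a.+1 b.+1 ==> (s (f a) < s (f b))]].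

Definition perm_avoid_count (k n : nat) (p : rel nat) : nat :=
  #|[set s : 'S_n | ~~ perm_contains k p s]|.

Definition wilf_equiv (k : nat) (p q : rel nat) : Prop :=
  forall n, 1 <= n -> perm_avoid_count k n p = perm_avoid_count k n q.

(* Ferrers board lam = (lam_1 >= ... >= lam_n > 0), lam_1 = n,
   stored 0-based: row i+1 has length nth 0 lam i. *)
Definition ferrers (n : nat) (lam : seq nat) : Prop :=
  [/\ size lam = n, sorted geq lam, all (fun x => 0 < x) lam &
      nth 0 lam 0 = n].

Definition in_board (n : nat) (lam : seq nat) (r c : 'I_n) : bool :=
  c < nth 0 lam r.

(* a 0/1-filling is given by its set of cells containing a 1 *)
Definition transversal (n : nat) (lam : seq nat) (T : {set 'I_n * 'I_n}) : bool :=
  [&& [forall rc in T, in_board lam rc.1 rc.2],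
      [forall r : 'I_n, #|[set c : 'I_n | (r, c) \in T]| == 1] &
      [forall c : 'I_n, #|[set r : 'I_n | (r, c) \in T]| == 1]].

Definition trans_contains (m n : nat) (lam : seq nat) (p : rel nat)
    (T : {set 'I_n * 'I_n}) : bool :=
  [exists R : {ffun 'I_m -> 'I_n}, exists C : {ffun 'I_m -> 'I_n},
   exists sg : {ffun 'I_m -> 'I_m},
    [&& [forall a : 'I_m, forall b : 'I_m, (a < b) ==> (R a < R b)],
        [forall a : 'I_m, forall b : 'I_m, (a < b) ==> (C a < C b)],
        [forall a : 'I_m, forall b : 'I_m, in_board lam (R a) (C b)],
        [forall b : 'I_m, (R (sg b), C b) \in T] &
        [forall a : 'I_m, forall b : 'I_m, p a.+1 b.+1 ==> (sg a < sg b)]]].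

Definition trans_avoid_count (m n : nat) (lam : seq nat) (p : rel nat) : nat :=
  #|[set T : {set 'I_n * 'I_n} | transversal lam T && ~~ trans_contains m lam p T]|.

Definition shape_wilf_equiv (m : nat) (p q : rel nat) : Prop :=
  forall n (lam : seq nat), ferrers n lam ->
    trans_avoid_count m n lam p = trans_avoid_count m n lam q.

(* Let m = i1 - 1; call the labels 1..m the head and m+1..k the tail.  For a
   permutation s, call a cell (c, r) beyond if the tail embeds in s strictly
   right of column c with every non-isolated tail label strictly above row r.
   Beyond cells form a down-set, and since the non-isolated tail labels lie
   above all head labels, s contains p exactly when the head occurs among the
   points (c, s c) that are beyond.  Rearranging the values of s on these free
   columns, inside the beyond cells, does not change which cells are beyond
   (take a tail occurrence whose first column is as far right as possible).
   Hence the permutations with given beyond cells and given values off the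
   free columns correspond to the transversals of a Ferrers board, avoiding p
   iff avoiding the head I_p.  This data depends only on I and J_p = J_p', so
   shape-Wilf equivalence of I_p and I_p' yields Wilf equivalence. *)

From Pilot Require Import Defs.
From mathcomp Require Import all_boot all_fingroup.
From Stdlib Require Import FunctionalExtensionality.
Set Implicit Arguments. Unset Strict Implicit. Unset Printing Implicit Defensive.

Section IncreasingOrd.
Variables (m N : nat) (g : 'I_m -> 'I_N).
Hypothesis g_incr : forall i j : 'I_m, i < j -> g i < g j.

Lemma incr_ord_ltn : {mono g : i j / i < j}.
Proof.
move=> i j; apply/idP/idP; last exact: g_incr.
move=> gij; rewrite ltnNge; apply/negP; rewrite leq_eqVlt.
case/orP => [/eqP/val_inj ji | /g_incr ji]; first by move: gij; rewrite ji ltnn.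
by have := ltn_trans gij ji; rewrite ltnn.
Qed.

Lemma incr_ord_leq : {mono g : i j / i <= j}.
Proof. by move=> i j; rewrite leqNgt incr_ord_ltn -leqNgt. Qed.

Lemma incr_ord_inj : injective g.
Proof.
move=> i j gij; apply/val_inj/eqP.
by rewrite eqn_leq -(incr_ord_leq i j) -(incr_ord_leq j i) gij leqnn.
Qed.

End IncreasingOrd.

Lemma enum_val_ord_incr N (A : {set 'I_N}) (i j : 'I_#|A|) :
  i < j -> enum_val i < enum_val j.
Proof.
have srt : sorted ltn (map val (enum A)).
  rewrite -[enum _](eq_filter (mem_enum _)).
  rewrite -(eq_filter (mem_map val_inj _)) -filter_map.
  by rewrite (sorted_filter ltn_trans) // unlock val_ord_enum iota_ltn_sorted.
have nthE (l : 'I_#|A|) : enum_val l = nth 0 (map val (enum A)) l :> nat.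
  by rewrite (nth_map (enum_val i)) -?cardE // -enum_val_nth.
move=> ij; rewrite !nthE; apply: (sorted_ltn_nth ltn_trans) => //.
  by rewrite inE size_map -cardE.
by rewrite inE size_map -cardE.
Qed.

Lemma card_ord_lt N (j : 'I_N) : #|[set i : 'I_N | i < j]| = j.
Proof.
have widen_inj : injective (widen_ord (ltnW (ltn_ord j))).
  by move=> x y /(congr1 val) xy; apply: val_inj.
rewrite -[RHS](card_ord j) -(card_imset _ widen_inj).
apply: eq_card => i; rewrite inE; apply/idP/imsetP => [ij | [l _ ->]]; last exact: (ltn_ord l).
by exists (Ordinal ij) => //; apply: val_inj.
Qed.

Lemma card_down_closed N (P : pred 'I_N) :
  (forall i j : 'I_N, i <= j -> P j -> P i) ->
  forall j : 'I_N, (j < #|[set i | P i]|) = P j.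
Proof.
move=> Pdown j; apply/idP/idP => [lt_j | Pj].
  apply: contraLR lt_j => nPj; rewrite -leqNgt -[X in _ <= X](card_ord_lt j).
  apply/subset_leq_card/subsetP => i; rewrite !inE ltnNge.
  by apply: contraL => ji; apply: contra nPj; apply: Pdown ji.
rewrite -(card_ord_lt j); apply/proper_card/properP; split.
  by apply/subsetP => i; rewrite !inE => /ltnW ij; apply: Pdown ij Pj.
by exists j; rewrite !inE ?ltnn.
Qed.

Lemma incr_perm_factor m N (g : 'I_m -> 'I_N) : injective g ->
  exists R : 'I_m -> 'I_N, exists2 sg : {perm 'I_m},
    (forall a b : 'I_m, a < b -> R a < R b) & forall b, R (sg b) = g b.
Proof.
move=> g_inj; pose A := [set g b | b in 'I_m].
have cardA : #|A| = m by rewrite card_imset ?card_ord.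
have gA b : g b \in A by apply: imset_f.
pose R a : 'I_N := enum_val (cast_ord (esym cardA) a).
pose sgf b := cast_ord cardA (enum_rank_in (gA b) (g b)).
have Rsgf b : R (sgf b) = g b by rewrite /R cast_ordK enum_rankK_in.
have sgf_inj : injective sgf by move=> a b /(congr1 R); rewrite !Rsgf => /g_inj.
exists R, (perm sgf_inj) => [a b ab | b]; first exact: enum_val_ord_incr.
by rewrite permE.
Qed.

Lemma perm_containsP k n (q : rel nat) (s : 'S_n) :
  reflect (exists f : 'I_k -> 'I_n,
             (forall a b : 'I_k, a < b -> f a < f b) /\
             (forall a b : 'I_k, q a.+1 b.+1 -> s (f a) < s (f b)))
          (perm_contains k q s).
Proof.
apply: (iffP existsP) => [[f /andP [/forallP F1 /forallP F2]] | [f [F1 F2]]].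
  by exists f; split=> a b; [move: (forallP (F1 a) b) | move: (forallP (F2 a) b)] => /implyP.
exists [ffun a => f a]; apply/andP; split; apply/forallP => a; apply/forallP => b;
  apply/implyP; rewrite !ffunE; [exact: F1 | exact: F2].
Qed.

Lemma trans_containsP m n (lam : seq nat) (q : rel nat) (T : {set 'I_n * 'I_n}) :
  reflect (exists R C : 'I_m -> 'I_n, exists sg : 'I_m -> 'I_m,
             [/\ forall a b : 'I_m, a < b -> R a < R b,
                 forall a b : 'I_m, a < b -> C a < C b,
                 forall a b, in_board lam (R a) (C b),
                 forall b, (R (sg b), C b) \in T &
                 forall a b : 'I_m, q a.+1 b.+1 -> sg a < sg b])
          (trans_contains m lam q T).
Proof.
apply: (iffP existsP) => [[R /existsP [C /existsP [sg]]] | [R [C [sg [R1 C1 RC T1 Q1]]]]].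
  case/and5P=> /forallP R1 /forallP C1 /forallP RC /forallP T1 /forallP Q1.
  exists R, C, sg; split=> [a b|a b|a b|b|a b] //; first by move: (forallP (R1 a) b) => /implyP.
  - by move: (forallP (C1 a) b) => /implyP.
  - exact: (forallP (RC a) b).
  - by move: (forallP (Q1 a) b) => /implyP.
exists [ffun a => R a]; apply/existsP; exists [ffun a => C a]; apply/existsP.
exists [ffun a => sg a]; apply/and5P; split; apply/forallP => a;
  try apply/forallP => b; rewrite !ffunE ?RC ?T1 //; apply/implyP; auto.
Qed.

Section PopRelated.
Variables (k : nat) (q : rel nat).
Hypothesis q_pop : is_pop k q.

Lemma pop_related_nonisolatedl a b : q a b -> ~~ isolated k q a.
Proof.
case: q_pop => rng _ _ qab; apply/negP => /allP /(_ b).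
have /andP [_ /andP [b1 bk]] := rng _ _ qab.
by rewrite mem_iota b1 add1n ltnS bk qab => /(_ isT).
Qed.

Lemma pop_related_nonisolatedr a b : q a b -> ~~ isolated k q b.
Proof.
case: q_pop => rng _ _ qab; apply/negP => /allP /(_ a).
have /andP [/andP [a1 ak] _] := rng _ _ qab.
by rewrite mem_iota a1 add1n ltnS ak qab andbF => /(_ isT).
Qed.

End PopRelated.

(* Position [a : 'I_k] carries label [a.+1], so [m <= a] selects the tail. *)
Definition tail_occ (q : rel nat) k m n (s : 'S_n) (c r : 'I_n)
    (f : {ffun 'I_k -> 'I_n}) : bool :=
  [&& [forall a : 'I_k, forall b : 'I_k, (m <= a < b) ==> (f a < f b)],
      [forall a : 'I_k, (m <= a) ==> (c < f a)],
      [forall a : 'I_k, forall b : 'I_k,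
         [&& m <= a, m <= b & q a.+1 b.+1] ==> (s (f a) < s (f b))] &
      [forall a : 'I_k, (m <= a) && ~~ isolated k q a.+1 ==> (r < s (f a))]].
Arguments tail_occ q k m {n} s c r f.

Definition tail_beyond (q : rel nat) k m n (s : 'S_n) (c r : 'I_n) : bool :=
  [exists f, tail_occ q k m s c r f].
Arguments tail_beyond q k m {n} s c r.

Lemma tail_occP (q : rel nat) k m n (s : 'S_n) (c r : 'I_n) (f : {ffun 'I_k -> 'I_n}) :
  reflect [/\ forall a b : 'I_k, m <= a -> a < b -> f a < f b,
              forall a : 'I_k, m <= a -> c < f a,
              forall a b : 'I_k, m <= a -> m <= b -> q a.+1 b.+1 -> s (f a) < s (f b) &
              forall a : 'I_k, m <= a -> ~~ isolated k q a.+1 -> r < s (f a)]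
          (tail_occ q k m s c r f).
Proof.
apply: (iffP and4P) => [[/forallP F1 /forallP F2 /forallP F3 /forallP F4] | [F1 F2 F3 F4]].
  split=> [a b ma ab | a ma | a b ma mb qab | a ma na].
  - by move: (forallP (F1 a) b); rewrite ma ab.
  - by move: (F2 a); rewrite ma.
  - by move: (forallP (F3 a) b); rewrite ma mb qab.
  - by move: (F4 a); rewrite ma na.
split; apply/forallP => a; try apply/forallP => b; apply/implyP.
- by case/andP; apply: F1.
- exact: F2.
- by case/and3P; apply: F3.
- by case/andP; apply: F4.
Qed.

Section TailStability.
Variables (q : rel nat) (k m n : nat).
Hypothesis q_pop : is_pop k q.
Hypothesis m_lt_k : m < k.
Local Notation occ := (tail_occ q k m).
Local Notation beyond := (@tail_beyond q k m n).

Lemma tail_occ_mono (s : 'S_n) (c r c' r' : 'I_n) (f : {ffun 'I_k -> 'I_n}) :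
  c' <= c -> r' <= r -> occ s c r f -> occ s c' r' f.
Proof.
move=> cc rr /tail_occP [F1 F2 F3 F4]; apply/tail_occP; split=> // a ma.
  exact: leq_ltn_trans cc (F2 a ma).
by move=> na; apply: leq_ltn_trans rr (F4 a ma na).
Qed.

Lemma tail_beyond_mono (s : 'S_n) (c r c' r' : 'I_n) :
  c' <= c -> r' <= r -> beyond s c r -> beyond s c' r'.
Proof.
by move=> cc rr /existsP [f occf]; apply/existsP; exists f; apply: tail_occ_mono occf.
Qed.

Lemma tail_occ_eq (s s' : 'S_n) (c r : 'I_n) (f : {ffun 'I_k -> 'I_n}) :
  (forall a : 'I_k, m <= a -> ~~ isolated k q a.+1 -> s' (f a) = s (f a)) ->
  occ s c r f -> occ s' c r f.
Proof.
move=> E /tail_occP [F1 F2 F3 F4]; apply/tail_occP; split=> // [a b ma mb qab | a ma na].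
  rewrite E ?(pop_related_nonisolatedl q_pop qab) //.
  by rewrite E ?(pop_related_nonisolatedr q_pop qab) //; apply: F3.
by rewrite E //; apply: F4.
Qed.

(* Pushing the first tail column as far right as possible leaves no room for
   another tail occurrence beyond any non-isolated cell of the chosen one. *)
Lemma tail_beyond_extremal (s : 'S_n) (c r : 'I_n) : beyond s c r ->
  exists2 f, occ s c r f &
    forall a : 'I_k, m <= a -> ~~ isolated k q a.+1 -> ~~ beyond s (f a) (s (f a)).
Proof.
case/existsP => f0 occf0; pose a0 : 'I_k := Ordinal m_lt_k.
case: (arg_maxnP (fun f : {ffun 'I_k -> 'I_n} => val (f a0)) occf0) => f occf fmax.
exists f => // a ma na; apply/negP => /existsP [g occg].
move/tail_occP: (occf) => [F1 F2 _ F4]; move/tail_occP: (occg) => [G1 G2 G3 G4].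
have occg' : occ s c r g.
  apply/tail_occP; split=> // [b mb | b mb nb].
    exact: ltn_trans (F2 a ma) (G2 b mb).
  exact: ltn_trans (F4 a ma na) (G4 b mb nb).
have f_a0_a : f a0 <= f a.
  case: (ltngtP a0 a) => [a0a | a_a0 | /val_inj -> //]; first exact/ltnW/F1.
  by rewrite ltnNge ma in a_a0.
have := leq_trans (G2 a0 (leqnn m)) (leq_trans (fmax g occg') f_a0_a).
by rewrite ltnn.
Qed.

Lemma tail_beyond_transfer (s s' : 'S_n) :
  (forall c, ~~ beyond s c (s c) -> s' c = s c) ->
  forall c r, beyond s c r -> beyond s' c r.
Proof.
move=> fixed c r /tail_beyond_extremal [f occf fmax]; apply/existsP; exists f.
by apply: tail_occ_eq occf => a ma na; apply/fixed/fmax.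
Qed.

Lemma tail_beyond_stable (s s' : 'S_n) :
  (forall c, ~~ beyond s c (s c) -> s' c = s c) ->
  (forall c, beyond s c (s c) -> beyond s c (s' c)) ->
  beyond s' =2 beyond s.
Proof.
move=> fixed moved c r; apply/idP/idP; last exact: tail_beyond_transfer.
case/tail_beyond_extremal => f occf fmax; apply/existsP; exists f.
apply: tail_occ_eq occf => a ma na; apply/esym/fixed.
by apply: contra (fmax a ma na) => /moved; apply: tail_beyond_transfer.
Qed.

End TailStability.

Lemma transversal_col_row n (lam : seq nat) (T : {set 'I_n * 'I_n}) :
  Defs.transversal lam T ->
  exists2 row : 'I_n -> 'I_n, injective row & forall i j, ((i, j) \in T) = (i == row j).
Proof.
case/and3P=> _ /forallP T_row /forallP T_col.
have T_colE j : {i | [set i | (i, j) \in T] = [set i]} by apply/sig_eqW/cards1P.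
pose row j := sval (T_colE j).
have rowE i j : ((i, j) \in T) = (i == row j).
  by have /setP/(_ i) := svalP (T_colE j); rewrite !inE.
exists row => // j j' Ej; case/cards1P: (T_row (row j)) => c rowj.
have /setP rowj_j := rowj; have := rowj_j j; have := rowj_j j'.
by rewrite !inE !rowE Ej !eqxx => /esym/eqP -> /esym/eqP.
Qed.

Section Compression.
Variables (n : nat) (B : 'I_n -> 'I_n -> bool) (s0 : 'S_n).
Hypothesis B_down : forall c r c' r' : 'I_n, c' <= c -> r' <= r -> B c r -> B c' r'.

Definition free_cols : {set 'I_n} := [set c | B c (s0 c)].
Definition free_rows : {set 'I_n} := s0 @: free_cols.
Local Notation n0 := #|free_cols|.

Lemma card_free_rows : #|free_rows| = n0.
Proof. exact/card_imset/perm_inj. Qed.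

Lemma mem_free_rows (c : 'I_n) : (s0 c \in free_rows) = (c \in free_cols).
Proof. exact/mem_imset/perm_inj. Qed.

Definition free_col (j : 'I_n0) : 'I_n := enum_val j.
Definition free_row (i : 'I_n0) : 'I_n := enum_val (cast_ord (esym card_free_rows) i).

Lemma free_col_incr (i j : 'I_n0) : i < j -> free_col i < free_col j.
Proof. exact: enum_val_ord_incr. Qed.

Lemma free_row_incr (i j : 'I_n0) : i < j -> free_row i < free_row j.
Proof. exact: (@enum_val_ord_incr _ free_rows (cast_ord _ i) (cast_ord _ j)). Qed.

Lemma free_colP (j : 'I_n0) : free_col j \in free_cols.
Proof. exact: enum_valP. Qed.

Lemma free_rowP (i : 'I_n0) : free_row i \in free_rows.
Proof. exact: enum_valP. Qed.

Lemma free_col_onto (c : 'I_n) : c \in free_cols -> {j | free_col j = c}.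
Proof. by move=> cC; exists (enum_rank_in cC c); apply: enum_rankK_in. Qed.

Lemma free_row_onto (r : 'I_n) : r \in free_rows -> {i | free_row i = r}.
Proof.
move=> rR; exists (cast_ord card_free_rows (enum_rank_in rR r)).
by rewrite /free_row cast_ordK enum_rankK_in.
Qed.

Definition compressed_board : seq nat :=
  [seq #|[set j | B (free_col j) (free_row i)]| | i <- enum 'I_n0].

Lemma in_compressed_board (i j : 'I_n0) :
  in_board compressed_board i j = B (free_col j) (free_row i).
Proof.
rewrite /in_board (nth_map i) ?size_enum_ord // nth_ord_enum.
apply: card_down_closed => j' j'' le_j; apply: B_down => //.
by rewrite (incr_ord_leq free_col_incr).
Qed.

Lemma compressed_board_ferrers : ferrers n0 compressed_board.
Proof.
split.
- by rewrite size_map size_enum_ord.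
- have srt : sorted (relpre val ltn) (enum 'I_n0).
    by rewrite -sorted_map val_enum_ord iota_ltn_sorted.
  rewrite sorted_map; apply: sub_sorted srt => i i' /= ii'.
  apply/subset_leq_card/subsetP => j; rewrite !inE; apply: B_down => //.
  by rewrite (incr_ord_leq free_row_incr) ltnW.
- apply/allP => _ /mapP [i _ ->]; rewrite card_gt0; apply/set0Pn.
  have /imsetP [c cC ->] := free_rowP i; have [j cj] := free_col_onto cC.
  by exists j; rewrite inE cj; move: cC; rewrite inE.
- case: (posnP n0) => [n0_0 | n0_gt0].
    by rewrite nth_default // size_map size_enum_ord n0_0.
  rewrite (nth_map (Ordinal n0_gt0)) ?size_enum_ord // -[RHS]card_ord -cardsT.
  apply: eq_card => j; rewrite !inE.
  have [i row_i] : {i | free_row i = s0 (free_col j)}.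
    by apply: free_row_onto; rewrite mem_free_rows free_colP.
  have := free_colP j; rewrite inE -row_i; apply: B_down => //.
  by rewrite (incr_ord_leq free_row_incr) nth_enum_ord.
Qed.

Definition compress (s : 'S_n) : {set 'I_n0 * 'I_n0} :=
  [set x | s (free_col x.2) == free_row x.1].

Definition fills_free_cells (s : 'S_n) : Prop :=
  (forall c, c \notin free_cols -> s c = s0 c) /\
  (forall c, c \in free_cols -> B c (s c)).

Lemma fills_free_rows (s : 'S_n) : fills_free_cells s ->
  forall c, c \in free_cols -> s c \in free_rows.
Proof.
case=> fixed _ c cC; apply: contraT => nR.
pose c' := (s0^-1)%g (s c); have s0c' : s0 c' = s c by rewrite permKV.
have c'C : c' \notin free_cols by rewrite -mem_free_rows s0c'.
have := fixed _ c'C; rewrite s0c' => /perm_inj c'c.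
by rewrite c'c cC in c'C.
Qed.

Lemma compress_transversal (s : 'S_n) : fills_free_cells s ->
  Defs.transversal compressed_board (compress s).
Proof.
move=> fill; have [fixed inB] := fill; apply/and3P; split.
- apply/forallP => [[i j]]; apply/implyP; rewrite inE /= in_compressed_board.
  by move=> /eqP <-; rewrite inB ?free_colP.
- apply/forallP => i; apply/cards1P.
  pose c := (s^-1)%g (free_row i); have sc : s c = free_row i by rewrite permKV.
  have cC : c \in free_cols.
    apply: contraT => nC; have := free_rowP i.
    by rewrite -sc fixed // mem_free_rows (negbTE nC).
  have [j cj] := free_col_onto cC; exists j; apply/setP => j'; rewrite !inE -sc -cj.
  by apply/eqP/eqP => [/perm_inj/(incr_ord_inj free_col_incr) | ->].
- apply/forallP => j; apply/cards1P.
  have [i ij] := free_row_onto (fills_free_rows fill (free_colP j)).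
  exists i; apply/setP => i'; rewrite !inE -ij.
  by apply/eqP/eqP => [/(incr_ord_inj free_row_incr) | ->].
Qed.

Lemma compress_inj (s s' : 'S_n) : fills_free_cells s -> fills_free_cells s' ->
  compress s = compress s' -> s = s'.
Proof.
move=> fill fill' E; apply/permP => c.
case: (boolP (c \in free_cols)) => cC; last by rewrite fill.1 ?fill'.1.
have [j <-] := free_col_onto cC.
have [i ij] := free_row_onto (fills_free_rows fill (free_colP j)).
have : (i, j) \in compress s by rewrite inE ij.
by rewrite E inE -ij => /eqP.
Qed.

Lemma compress_onto (T : {set 'I_n0 * 'I_n0}) : Defs.transversal compressed_board T ->
  exists2 s, fills_free_cells s & compress s = T.
Proof.
move=> tT; have [row row_inj TE] := transversal_col_row tT.
pose g c := if [pick j | free_col j == c] is Some j then free_row (row j) else s0 c.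
have g_in j : g (free_col j) = free_row (row j).
  rewrite /g; case: pickP => [j' /eqP /(incr_ord_inj free_col_incr) -> // | /(_ j)].
  by rewrite eqxx.
have g_out c : c \notin free_cols -> g c = s0 c.
  rewrite /g; case: pickP => [j /eqP <- | //]; by rewrite free_colP.
have g_inj : injective g.
  have out_in j c : c \notin free_cols -> g (free_col j) != g c.
    move=> cC; rewrite g_in g_out //; apply: contraNneq cC => E.
    by rewrite -mem_free_rows -E free_rowP.
  move=> c c'; case: (boolP (c \in free_cols)) => [/free_col_onto [j <-] | cC];
    case: (boolP (c' \in free_cols)) => [/free_col_onto [j' <-] | c'C].
  - by rewrite !g_in => /(incr_ord_inj free_row_incr)/row_inj ->.
  - by move/eqP; rewrite (negbTE (out_in _ _ c'C)).
  - by move/esym/eqP; rewrite (negbTE (out_in _ _ cC)).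
  - by rewrite !g_out //; apply: perm_inj.
exists (perm g_inj).
  split=> c; rewrite permE; first exact: g_out.
  case/free_col_onto => j <-; rewrite g_in -in_compressed_board.
  have rjT : (row j, j) \in T by rewrite TE.
  by case/and3P: tT => /forallP /(_ (row j, j)) /implyP /(_ rjT).
apply/setP => [[i j]]; rewrite inE /= permE g_in TE.
by apply/eqP/eqP => [/(incr_ord_inj free_row_incr) | ->].
Qed.

End Compression.

Definition beyond_profile n (bd : 'S_n -> 'I_n -> 'I_n -> bool) (s : 'S_n) :=
  ([set x : 'I_n * 'I_n | bd s x.1 x.2],
   [ffun c => if bd s c (s c) then None else Some (s c)]).

Section TailFiber.
Variables (q : rel nat) (k m n : nat).
Hypothesis q_pop : is_pop k q.
Hypothesis m_lt_k : m < k.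
Local Notation beyond := (@tail_beyond q k m n).
Variable s0 : 'S_n.
Local Notation B := (beyond s0).
Local Notation n0 := #|free_cols B s0|.
Local Notation board := (compressed_board B s0).

Lemma fills_tail_beyond (s : 'S_n) : fills_free_cells B s0 s -> beyond s =2 B.
Proof.
case=> fixed moved; apply: tail_beyond_stable => // c.
  by move=> nc; apply: fixed; rewrite inE.
by move=> bc; apply: moved; rewrite inE.
Qed.

Lemma fills_free_colsE (s : 'S_n) : fills_free_cells B s0 s ->
  forall c, (c \in free_cols B s0) = beyond s c (s c).
Proof.
move=> fill c; rewrite fills_tail_beyond //.
case: (boolP (c \in free_cols B s0)) => cC; first by rewrite fill.2.
by rewrite fill.1 //; move: cC; rewrite inE => /negbTE.
Qed.

Lemma beyond_profile_eq (s : 'S_n) :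
  beyond_profile beyond s = beyond_profile beyond s0 <-> fills_free_cells B s0 s.
Proof.
split=> [[/setP beyondE /ffunP valE] | fill].
  have beyond_eq c r : beyond s c r = B c r by have := beyondE (c, r); rewrite !inE.
  split=> c; rewrite inE => cC; have := valE c; rewrite !ffunE.
    by rewrite (negbTE cC); case: ifP => // _ [].
  by rewrite cC; case: ifP => // sc _; rewrite -beyond_eq.
have beyond_eq := fills_tail_beyond fill; congr pair.
  by apply/setP => x; rewrite !inE beyond_eq.
apply/ffunP => c; rewrite !ffunE -fills_free_colsE // inE.
by case: ifP => // /negbT nc; rewrite fill.1 // inE.
Qed.

Hypothesis head_below_tail :
  forall y x, 1 <= y <= m -> m < x <= k -> ~~ isolated k q x -> q y x.

Lemma tail_not_below_head (x y : 'I_k) : y < m <= x -> ~~ q x.+1 y.+1.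
Proof.
case/andP=> ym mx; apply/negP => qxy; case: q_pop => _ irr trans.
have qyx : q y.+1 x.+1.
  apply: (head_below_tail _ _ (pop_related_nonisolatedl q_pop qxy)) => //.
  by rewrite ltnS mx ltn_ord.
by have := trans _ _ _ qxy qyx; rewrite (negbTE (irr _)).
Qed.

Hypothesis m_gt0 : 0 < m.

Section Filling.
Variable s : 'S_n.
Hypothesis fill : fills_free_cells B s0 s.

Lemma perm_contains_compress :
  perm_contains k q s -> trans_contains m board (restrict q m) (compress B s0 s).
Proof.
case/perm_containsP => f [f_incr f_rel].
pose wd (a : 'I_m) : 'I_k := widen_ord (ltnW m_lt_k) a.
have head_beyond a b : beyond s (f (wd a)) (s (f (wd b))).
  apply/existsP; exists [ffun x => f x]; apply/tail_occP.
  split=> [x y _ | x mx | x y _ _ | x mx nx]; rewrite !ffunE; [exact: f_incr | | exact: f_rel | ].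
    exact/f_incr/(leq_trans (ltn_ord a)).
  apply: f_rel; apply: (head_below_tail _ _ nx) => /=; first exact: ltn_ord.
  by rewrite ltnS mx ltn_ord.
have head_free a : f (wd a) \in free_cols B s0 by rewrite (fills_free_colsE fill).
have [C CE] := all_sig (fun a => free_col_onto (head_free a)).
have [rI rIE] := all_sig (fun a => free_row_onto (fills_free_rows fill (head_free a))).
have rI_inj : injective rI.
  move=> a b Eab; have := rIE b; rewrite -Eab rIE => /perm_inj/(incr_ord_inj f_incr) ab.
  by apply: val_inj; move/(congr1 val): ab.
have [R [sg R_incr RsgE]] := incr_perm_factor rI_inj.
apply/trans_containsP; exists R, C, sg; split=> [//|a b ab|a b|b|a b].
- by rewrite -(incr_ord_ltn (@free_col_incr _ B s0)) !CE; apply: f_incr.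
- rewrite in_compressed_board; last exact: tail_beyond_mono.
  by rewrite -(permKV sg a) RsgE rIE CE -(fills_tail_beyond fill).
- by rewrite inE /= RsgE rIE CE.
- case/and3P=> qab _ _; rewrite -(incr_ord_ltn R_incr) !RsgE.
  by rewrite -(incr_ord_ltn (@free_row_incr _ B s0)) !rIE; apply: f_rel.
Qed.

(* The top-right cell of a head occurrence on the board is beyond, which
   provides a tail occurrence to complete it. *)
Lemma compress_contains_perm :
  trans_contains m board (restrict q m) (compress B s0 s) -> perm_contains k q s.
Proof.
case/trans_containsP => R [C [sg [R_incr C_incr RC_board RC_in T_rel]]].
pose amax : 'I_m := Ordinal (etrans (ltn_predL m) m_gt0).
have le_amax (a : 'I_m) : a <= amax by rewrite -ltnS prednK ?ltn_ord.
have sC b : s (free_col (C b)) = free_row (R (sg b)).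
  by have := RC_in b; rewrite inE => /eqP.
have /existsP [f /tail_occP [f_incr f_right f_rel f_above]] :
    beyond s (free_col (C amax)) (free_row (R amax)).
  by rewrite (fills_tail_beyond fill) -in_compressed_board //; apply: tail_beyond_mono.
pose head (x : 'I_k) : 'I_m := insubd amax (val x).
have headE (x : 'I_k) : x < m -> head x = x :> nat by move=> xm; rewrite val_insubd xm.
pose g (x : 'I_k) := if x < m then free_col (C (head x)) else f x.
apply/perm_containsP; exists g; split=> x y; rewrite /g.
- case: ifP => xm; case: ifP => ym xy.
  + by rewrite (incr_ord_ltn (@free_col_incr _ B s0)) (incr_ord_ltn C_incr) !headE.
  + apply: leq_ltn_trans (f_right _ _); last by rewrite leqNgt ym.
    by rewrite (incr_ord_leq (@free_col_incr _ B s0)) (incr_ord_leq C_incr).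
  + by move: (ltn_trans xy ym); rewrite xm.
  + by apply: f_incr xy; rewrite leqNgt xm.
- case: ifP => xm; case: ifP => ym qxy.
  + rewrite !sC (incr_ord_ltn (@free_row_incr _ B s0)) (incr_ord_ltn R_incr).
    by apply: T_rel; rewrite /restrict (headE x xm) (headE y ym) qxy xm ym.
  + have my : m <= y by rewrite leqNgt ym.
    rewrite sC; apply: leq_ltn_trans (f_above y my (pop_related_nonisolatedr q_pop qxy)).
    by rewrite (incr_ord_leq (@free_row_incr _ B s0)) (incr_ord_leq R_incr).
  + by move: qxy; rewrite (negbTE (tail_not_below_head _)) // ym leqNgt xm.
  + by apply: f_rel qxy; rewrite leqNgt ?xm ?ym.
Qed.

Lemma compress_containsE :
  perm_contains k q s = trans_contains m board (restrict q m) (compress B s0 s).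
Proof. by apply/idP/idP; [apply: perm_contains_compress | apply: compress_contains_perm]. Qed.

End Filling.

Lemma tail_fiber_card :
  #|[set s | (beyond_profile beyond s == beyond_profile beyond s0) && ~~ perm_contains k q s]|
  = trans_avoid_count m n0 board (restrict q m).
Proof.
have B_down := @tail_beyond_mono q k m n s0.
rewrite /trans_avoid_count -(@card_in_imset _ _ (compress B s0)); last first.
  move=> s s'; rewrite !inE => /andP [/eqP/beyond_profile_eq fill _].
  by case/andP=> /eqP/beyond_profile_eq fill' _; apply: compress_inj.
apply: eq_card => T; rewrite inE; apply/imsetP/andP => [[s] | [tT nT]].
  rewrite inE => /andP [/eqP/beyond_profile_eq fill ns] ->.
  by split; [apply: compress_transversal B_down _ fill | rewrite -compress_containsE].
have [s fill sT] := compress_onto B_down tT; rewrite -sT in nT *.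
by exists s => //; rewrite inE compress_containsE // nT andbT; apply/eqP/beyond_profile_eq.
Qed.

End TailFiber.

Lemma perm_avoid_count_partition (T : finType) k n (q : rel nat) (key : 'S_n -> T) :
  perm_avoid_count k n q =
  \sum_(K in [set key s | s : 'S_n]) #|[set s | (key s == K) && ~~ perm_contains k q s]|.
Proof.
rewrite /perm_avoid_count -sum1_card (partition_big key (mem [set key s | s : 'S_n])) /=;
  last by move=> s _; apply: imset_f.
by apply: eq_bigr => K _; rewrite sum1dep_card; apply: eq_card => s; rewrite !inE andbC.
Qed.

Lemma tail_beyond_ext (q q' : rel nat) k m n :
  (forall x y, m < x -> m < y -> q x y = q' x y) ->
  (forall x, m < x <= k -> isolated k q x = isolated k q' x) ->
  @tail_beyond q k m n = @tail_beyond q' k m n.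
Proof.
move=> qE isoE; apply: functional_extensionality => s.
apply: functional_extensionality => c; apply: functional_extensionality => r.
apply: eq_existsb => f; congr [&& _, _, _ & _].
  apply: eq_forallb => a; apply: eq_forallb => b.
  by case: (leqP m a) => ma; case: (leqP m b) => mb //=; rewrite qE.
by apply: eq_forallb => a; case: (leqP m a) => ma //=; rewrite isoE // ltnS ma ltn_ord.
Qed.

Section TwoPops.
Variables (k : nat) (p p' : rel nat).
Hypotheses (p_pop : is_pop k p) (p'_pop : is_pop k p').
Hypothesis same_isolated : forall x, 1 <= x <= k -> isolated k p x = isolated k p' x.

Lemma pop_eq_above i1 :
  (forall x y, i1 <= x <= k -> ~~ isolated k p x ->
               i1 <= y <= k -> ~~ isolated k p y -> p x y = p' x y) ->
  forall x y, i1 <= x -> i1 <= y -> p x y = p' x y.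
Proof.
have [rng _ _] := p_pop; have [rng' _ _] := p'_pop.
move=> agree x y ix iy; apply/idP/idP => pxy.
  have /andP [/andP [_ xk] /andP [_ yk]] := rng _ _ pxy.
  by rewrite -agree ?ix ?iy ?xk ?yk ?(pop_related_nonisolatedl p_pop pxy)
             ?(pop_related_nonisolatedr p_pop pxy).
have /andP [/andP [x1 xk] /andP [y1 yk]] := rng' _ _ pxy.
rewrite agree ?ix ?iy ?xk ?yk // same_isolated ?x1 ?y1 ?xk ?yk //.
  exact: (pop_related_nonisolatedl p'_pop pxy).
exact: (pop_related_nonisolatedr p'_pop pxy).
Qed.

Lemma pop_eq_pos : (forall x y, 0 < x -> 0 < y -> p x y = p' x y) -> p = p'.
Proof.
have [rng _ _] := p_pop; have [rng' _ _] := p'_pop.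
move=> agree; apply: functional_extensionality => x; apply: functional_extensionality => y.
case: (posnP x) => [x0 | x_gt0]; last case: (posnP y) => [y0 | y_gt0]; last exact: agree.
  by apply/idP/idP => [/rng | /rng']; rewrite x0.
by apply/idP/idP => [/rng | /rng']; rewrite y0 andbF.
Qed.

End TwoPops.

Theorem theorem1p2 (k : nat) (p p' : rel nat) (i1 : nat) :
  is_pop k p -> is_pop k p' ->
  (forall x, 1 <= x <= k -> isolated k p x = isolated k p' x) ->
  1 <= i1 <= k -> isolated k p i1 ->
  (forall x, 1 <= x < i1 -> ~~ isolated k p x) ->
  (forall x y, i1 <= x <= k -> ~~ isolated k p x -> 1 <= y <= i1.-1 ->
     p y x /\ p' y x) ->
  shape_wilf_equiv i1.-1 (restrict p i1.-1) (restrict p' i1.-1) ->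
  (forall x y, i1 <= x <= k -> ~~ isolated k p x ->
               i1 <= y <= k -> ~~ isolated k p y -> p x y = p' x y) ->
  wilf_equiv k p p'.
Proof.
move=> p_pop p'_pop iso /andP [i1_gt0 i1_le_k] _ _ below shape J n _.
have agree := pop_eq_above p_pop p'_pop iso J.
have [m0 | m_gt0] := posnP i1.-1.
  suff -> : p = p' by [].
  apply: (pop_eq_pos p_pop p'_pop) => x y x_gt0 y_gt0.
  by apply: agree; rewrite -(prednK i1_gt0) m0.
set m := i1.-1 in m_gt0 below shape *.
have m_lt_i1 : m < i1 by rewrite prednK.
have m_lt_k : m < k := leq_trans m_lt_i1 i1_le_k.
have tail_range x : m < x <= k -> (i1 <= x <= k) * (1 <= x <= k).
  by case/andP=> mx xk; rewrite -[i1]prednK // mx xk (leq_ltn_trans (leq0n m) mx).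
have below_p y x : 1 <= y <= m -> m < x <= k -> ~~ isolated k p x -> p y x.
  by move=> hy /tail_range [hx _] nx; case: (below x y hx nx hy).
have below_p' y x : 1 <= y <= m -> m < x <= k -> ~~ isolated k p' x -> p' y x.
  move=> hy /tail_range [hx x_range]; rewrite -iso // => nx.
  by case: (below x y hx nx hy).
have beyondE : @tail_beyond p k m n = @tail_beyond p' k m n.
  apply: tail_beyond_ext => [x y mx my | x /tail_range [_ x_range]]; last exact: iso.
  by apply: agree; rewrite -[i1]prednK.
rewrite !(perm_avoid_count_partition _ _ (beyond_profile (@tail_beyond p k m n))).
apply: eq_bigr => _ /imsetP [s0 _ ->].
rewrite (tail_fiber_card p_pop m_lt_k s0 below_p m_gt0) beyondE.
rewrite (tail_fiber_card p'_pop m_lt_k s0 below_p' m_gt0).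
exact/shape/compressed_board_ferrers/tail_beyond_mono.
Qed.
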